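(* Let $d\ge2$ and $0<\delta\le 1$, and let $\mathcal{P}_\delta$ be the protection of the Delaunay triangulation of $T_\delta(\mathbb{Z}^d)$ and $R_\delta$ its Delaunay radius. Writing $N_\delta=\delta^4(d^2-1)+\delta^2(d^2+2)+d^2-1$, we have $$\frac{\mathcal{P}_\delta}{R_\delta}=\begin{cases}\sqrt{\dfrac{\delta^4(d^2-1)+\delta^2(d^2-22)+d^2+23}{N_\delta}}-1 & \text{if } \frac{1}{\sqrt{d+1}}<\delta\le1,\\[2mm] \sqrt{\dfrac{d^2+2d+24}{d^2+2d}}-1 & \text{if } \delta=\frac{1}{\sqrt{d+1}},\\[2mm] \sqrt{\dfrac{\delta^4(d^2-1)+\delta^2(d^2+24d+2)+d^2-1}{N_\delta}}-1 & \text{if } 0<\delta<\frac{1}{\sqrt{d+1}}.\end{cases}$$ Moreover $R_\delta=\sqrt{N_\delta/(12d)}$.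
   Context: For $\delta\in\mathbb{R}$ the diagonal distortion $T_\delta:\mathbb{R}^d\to\mathbb{R}^d$ is $T_\delta(x)=x-\frac{1-\delta}{d}\,\Delta(x)\,\mathbf{1}$, with $\Delta(x)=\sum_i x_i$, $\mathbf{1}=(1,\dots,1)$. The Freudenthal triangulation of $[0,1]^d$ consists of the simplices whose vertex sets are chains $p_0\le p_1\le\dots\le p_k$ in $\{0,1\}^d$ (coordinatewise strictly increasing); translating it by all integer vectors gives a triangulation of $\mathbb{R}^d$ with vertex set $\mathbb{Z}^d$. For $0<\delta\le 1$ the Delaunay triangulation of $T_\delta(\mathbb{Z}^d)$ is (for $\delta<1$) the image under $T_\delta$ of this triangulation; all its $d$-simplices are congruent and have the same circumradius, the Delaunay radius $R_\delta$ (for $\delta=1$ take the $T_1$-image of the same Freudenthal simplices, i.e. the Freudenthal simplices themselves). For a Delaunay $d$-simplex $\tau$ with circumcenter $c_\tau$ and circumradius $r_\tau$, its protection is $\min\{\|q-c_\tau\|-r_\tau : q\in T_\delta(\mathbb{Z}^d)\text{ not a vertex of }\tau\}$; the protection $\mathcal{P}_\delta$ of the lattice is the infimum of this over all Delaunay $d$-simplices $\tau$. *)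

From Stdlib Require Import Reals ZArith List.
Import ListNotations.
Open Scope R_scope.

(* Vectors of R^d are represented as functions nat -> R; only the
   coordinates 0..d-1 are meaningful. Integer points as nat -> Z. *)

Definition vsum (d : nat) (f : nat -> R) : R :=
  fold_right Rplus 0 (map f (seq 0 d)).

Definition dist (d : nat) (x y : nat -> R) : R :=
  sqrt (vsum d (fun i => (x i - y i) ^ 2)).

Definition veq (d : nat) (x y : nat -> R) : Prop :=
  forall i, (i < d)%nat -> x i = y i.

Definition Delta (d : nat) (x : nat -> R) : R := vsum d x.

Definition Tdelta (d : nat) (delta : R) (x : nat -> R) : nat -> R :=
  fun i => x i - (1 - delta) / INR d * Delta d x.

Definition zvec (z : nat -> Z) : nat -> R := fun i => IZR (z i).

(* p = (p_0, ..., p_d) is a chain p_0 < p_1 < ... < p_d in {0,1}^d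
   (coordinatewise <=, and distinct): the vertex set of a Freudenthal
   d-simplex of [0,1]^d. *)
Definition freudenthal_chain (d : nat) (p : nat -> nat -> Z) : Prop :=
  (forall k i, (k <= d)%nat -> (i < d)%nat -> p k i = 0%Z \/ p k i = 1%Z) /\
  (forall k, (k < d)%nat ->
     (forall i, (i < d)%nat -> (p k i <= p (S k) i)%Z) /\
     (exists i, (i < d)%nat /\ p k i <> p (S k) i)).

Definition dvertex (d : nat) (delta : R) (z : nat -> Z) (p : nat -> nat -> Z)
  (k : nat) : nat -> R :=
  Tdelta d delta (fun i => IZR (z i + p k i)).

Definition circumsphere (d : nat) (delta : R) (z : nat -> Z)
  (p : nat -> nat -> Z) (c : nat -> R) (r : R) : Prop :=
  forall k, (k <= d)%nat -> dist d (dvertex d delta z p k) c = r.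

(* The set of values ||q - c_tau|| - r_tau, for tau a Delaunay d-simplex
   and q a lattice point of T_delta(Z^d) that is not a vertex of tau. *)
Definition protection_values (d : nat) (delta : R) (t : R) : Prop :=
  exists (z : nat -> Z) (p : nat -> nat -> Z) (c : nat -> R) (r : R)
         (w : nat -> Z),
    freudenthal_chain d p /\ circumsphere d delta z p c r /\
    (~ exists k, (k <= d)%nat /\
         veq d (Tdelta d delta (zvec w)) (dvertex d delta z p k)) /\
    t = dist d (Tdelta d delta (zvec w)) c - r.

Definition is_glb (E : R -> Prop) (m : R) : Prop :=
  (forall x, E x -> m <= x) /\ (forall b, (forall x, E x -> b <= x) -> b <= m).

Definition Ndelta (d : nat) (delta : R) : R :=
  delta ^ 4 * (INR d ^ 2 - 1) + delta ^ 2 * (INR d ^ 2 + 2) + INR d ^ 2 - 1.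

(* Translate the simplex so that its base vertex is the origin and order the coordinates along
   the chain, which adds the unit vectors e_(s 0), e_(s 1), ... one at a time. Since
   |T_delta x|^2 = |x|^2 - beta (sum x)^2 with beta = (1 - delta^2) / d and T_delta is
   self-adjoint, equating the distances to consecutive vertices determines T_delta of the
   circumcenter coordinatewise, and with it the circumradius R^2 = N_delta / (12 d).
   For a lattice point u, with v_j = u_(s j), the excess |T_delta u - c|^2 - R^2 equals
     delta^2 sum_j v_j (v_j - 1) + beta sum_(i<j) (v_i - v_j) (v_i - v_j - 1).
   Each product x (x - 1) of an integer is 0 or at least 2, and all of them vanish exactly when u
   is a vertex of the simplex; hence the excess is at least min (2 delta^2, 2 beta), with equality
   at -e_(d-1) and at e_1. Since delta^2 = beta exactly when delta = 1 / sqrt (d + 1), comparing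
   the two splits the ratio P / R into three cases. *)

From Pilot Require Import Defs.
From Stdlib Require Import Reals ZArith List Lia Lra Psatz.
From Stdlib Require Import Permutation FinFun FunctionalExtensionality.
Open Scope R_scope.

Lemma fold_right_Rplus_acc (l : list R) (a : R) :
  fold_right Rplus a l = fold_right Rplus 0 l + a.
Proof. induction l as [|x l IH]; simpl; [lra | rewrite IH; lra]. Qed.

Lemma vsum_0 (f : nat -> R) : vsum 0 f = 0.
Proof. reflexivity. Qed.

Lemma vsum_S (n : nat) (f : nat -> R) : vsum (S n) f = vsum n f + f n.
Proof.
  unfold vsum. rewrite seq_S, map_app, fold_right_app; simpl.
  rewrite fold_right_Rplus_acc. lra.
Qed.

Lemma vsum_ext (n : nat) (f g : nat -> R) :
  (forall i, (i < n)%nat -> f i = g i) -> vsum n f = vsum n g.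
Proof.
  induction n as [|n IH]; intros H; [reflexivity|].
  rewrite !vsum_S, IH by (intros; apply H; lia). rewrite H by lia. reflexivity.
Qed.

Lemma vsum_add (n : nat) (f g : nat -> R) :
  vsum n (fun i => f i + g i) = vsum n f + vsum n g.
Proof. induction n as [|n IH]; [rewrite !vsum_0; simpl; lra | rewrite !vsum_S, IH; lra]. Qed.

Lemma vsum_scal (n : nat) (k : R) (f : nat -> R) :
  vsum n (fun i => k * f i) = k * vsum n f.
Proof. induction n as [|n IH]; [rewrite !vsum_0; simpl; lra | rewrite !vsum_S, IH; lra]. Qed.

Lemma vsum_const (n : nat) (k : R) : vsum n (fun _ => k) = INR n * k.
Proof. induction n as [|n IH]; [rewrite !vsum_0; simpl; lra | rewrite vsum_S, IH, S_INR; lra]. Qed.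

Lemma vsum_nonneg (n : nat) (f : nat -> R) :
  (forall i, (i < n)%nat -> 0 <= f i) -> 0 <= vsum n f.
Proof.
  induction n as [|n IH]; intros H; [rewrite vsum_0; lra|].
  rewrite vsum_S. specialize (IH ltac:(intros; apply H; lia)).
  specialize (H n ltac:(lia)). lra.
Qed.

Lemma vsum_term_le (n : nat) (f : nat -> R) (j : nat) :
  (forall i, (i < n)%nat -> 0 <= f i) -> (j < n)%nat -> f j <= vsum n f.
Proof.
  induction n as [|n IH]; intros H Hj; [lia|]. rewrite vsum_S.
  assert (Hn : 0 <= f n) by (apply H; lia).
  destruct (Nat.eq_dec j n) as [->|Hjn].
  - assert (0 <= vsum n f) by (apply vsum_nonneg; intros; apply H; lia). lra.
  - assert (f j <= vsum n f) by (apply IH; [intros; apply H|]; lia). lra.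
Qed.

Lemma vsum_eq_single (n k : nat) (f : nat -> R) :
  (k < n)%nat -> (forall j, (j < n)%nat -> j <> k -> f j = 0) -> vsum n f = f k.
Proof.
  induction n as [|n IH]; intros Hk H; [lia|]. rewrite vsum_S.
  destruct (Nat.eq_dec k n) as [->|Hkn].
  - rewrite (vsum_ext n f (fun _ => 0)), vsum_const by (intros; apply H; lia). lra.
  - rewrite IH; [rewrite (H n) by lia; lra | lia | intros; apply H; lia].
Qed.

Lemma vsum_eq_0 (n : nat) (f : nat -> R) :
  (forall j, (j < n)%nat -> f j = 0) -> vsum n f = 0.
Proof. intros H. rewrite (vsum_ext n f (fun _ => 0)), vsum_const by exact H. ring. Qed.

Lemma vsum_prefix (n k : nat) (f : nat -> R) : (k <= n)%nat ->
  vsum n (fun j => if (j <? k)%nat then f j else 0) = vsum k f.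
Proof.
  induction n as [|n IH]; intros Hk.
  - replace k with 0%nat by lia. reflexivity.
  - destruct (Nat.eq_dec k (S n)) as [->|Hkn].
    + apply vsum_ext. intros i Hi. destruct (Nat.ltb_spec i (S n)); [reflexivity | lia].
    + rewrite vsum_S, IH by lia. destruct (Nat.ltb_spec n k); [lia | lra].
Qed.

Lemma vsum_INR (n : nat) : vsum n INR = INR n * (INR n - 1) / 2.
Proof.
  induction n as [|n IH]; [rewrite !vsum_0; simpl; lra | rewrite vsum_S, IH, S_INR; field].
Qed.

Lemma vsum_INR_sq (n : nat) :
  vsum n (fun j => INR j ^ 2) = INR n * (INR n - 1) * (2 * INR n - 1) / 6.
Proof.
  induction n as [|n IH]; [rewrite !vsum_0; simpl; lra | rewrite vsum_S, IH, S_INR; field].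
Qed.

Lemma vsum_perm (n : nat) (s : nat -> nat) (f : nat -> R) :
  bFun n s -> bInjective n s -> vsum n f = vsum n (fun j => f (s j)).
Proof.
  intros Hb Hi. unfold vsum. rewrite <- (map_map s f).
  assert (Hsum : forall l l', Permutation l l' ->
    fold_right Rplus 0 (map f l) = fold_right Rplus 0 (map f l'))
    by (induction 1; simpl; lra).
  apply Hsum, Permutation_sym.
  assert (Hp : Permutation (map s (seq 0 n)) (seq 0 n)).
  { apply NoDup_Permutation_bis.
    - apply NoDup_map_NoDup_ForallPairs; [|apply seq_NoDup].
      intros x y Hx Hy. apply in_seq in Hx, Hy. apply Hi; lia.
    - rewrite length_map. lia.
    - intros x Hx. apply in_map_iff in Hx as [j [<- Hj]].
      apply in_seq in Hj. apply in_seq. specialize (Hb j). lia. }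
  exact Hp.
Qed.

Definition beta (d : nat) (de : R) : R := (1 - de ^ 2) / INR d.

Section Distortion.

Variables (d : nat) (de : R).
Hypothesis HD : INR d <> 0.

Lemma Tdelta_add (x y : nat -> R) (i : nat) :
  Tdelta d de (fun j => x j + y j) i = Tdelta d de x i + Tdelta d de y i.
Proof. unfold Tdelta, Defs.Delta; cbv beta. rewrite vsum_add. ring. Qed.

Lemma vsum_Tdelta (x : nat -> R) : vsum d (Tdelta d de x) = de * vsum d x.
Proof.
  unfold Tdelta, Defs.Delta.
  rewrite (vsum_ext d _ (fun i => x i + (- ((1 - de) / INR d * vsum d x)))) by (intros; ring).
  rewrite vsum_add, vsum_const. field. exact HD.
Qed.

Lemma vsum_Tdelta_mul (x y : nat -> R) :
  vsum d (fun i => Tdelta d de x i * y i) = vsum d (fun i => x i * Tdelta d de y i).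
Proof.
  unfold Tdelta, Defs.Delta.
  set (a := (1 - de) / INR d).
  rewrite (vsum_ext d (fun i => (x i - a * vsum d x) * y i)
             (fun i => x i * y i + (- a * vsum d x) * y i)) by (intros; ring).
  rewrite (vsum_ext d (fun i => x i * (y i - a * vsum d y))
             (fun i => x i * y i + (- a * vsum d y) * x i)) by (intros; ring).
  rewrite !vsum_add, !vsum_scal. ring.
Qed.

Lemma vsum_Tdelta_sq (x : nat -> R) :
  vsum d (fun i => Tdelta d de x i ^ 2) = vsum d (fun i => x i ^ 2) - beta d de * vsum d x ^ 2.
Proof.
  unfold Tdelta, Defs.Delta.
  set (a := (1 - de) / INR d).
  rewrite (vsum_ext d _ (fun i => (x i ^ 2 + (- 2 * a * vsum d x) * x i) + (a * vsum d x) ^ 2))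
    by (intros; ring).
  rewrite !vsum_add, vsum_scal, vsum_const. unfold a, beta. field. exact HD.
Qed.

Lemma sq_dist_Tdelta (x c : nat -> R) :
  vsum d (fun i => (Tdelta d de x i - c i) ^ 2) =
  vsum d (fun i => x i ^ 2) - beta d de * vsum d x ^ 2
  - 2 * vsum d (fun i => x i * Tdelta d de c i) + vsum d (fun i => c i ^ 2).
Proof.
  rewrite (vsum_ext d _ (fun i => (Tdelta d de x i ^ 2 + (-2) * (Tdelta d de x i * c i))
                                   + c i ^ 2)) by (intros; ring).
  rewrite !vsum_add, vsum_scal, vsum_Tdelta_sq, vsum_Tdelta_mul. ring.
Qed.

Lemma Tdelta_inv (y : nat -> R) (i : nat) : de <> 0 ->
  Tdelta d de (fun j => y j + (1 - de) / (de * INR d) * vsum d y) i = y i.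
Proof.
  intros Hde. unfold Tdelta, Defs.Delta.
  rewrite vsum_add, vsum_const. field. split; assumption.
Qed.

Lemma Tdelta_ext (x y : nat -> R) :
  (forall i, (i < d)%nat -> x i = y i) -> veq d (Tdelta d de x) (Tdelta d de y).
Proof.
  intros H i Hi. unfold Tdelta, Defs.Delta.
  rewrite (vsum_ext d x y H), H by exact Hi. reflexivity.
Qed.

Lemma Tdelta_inj (x y : nat -> R) : de <> 0 ->
  veq d (Tdelta d de x) (Tdelta d de y) -> forall i, (i < d)%nat -> x i = y i.
Proof.
  intros Hde H i Hi.
  assert (Hsum : vsum d x = vsum d y).
  { apply (Rmult_eq_reg_l de); [|exact Hde].
    rewrite <- !vsum_Tdelta. apply vsum_ext. exact H. }
  specialize (H i Hi). unfold Tdelta, Defs.Delta in H. rewrite Hsum in H. lra.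
Qed.

Lemma dist_Tdelta_translate (x y c : nat -> R) :
  Defs.dist d (Tdelta d de (fun i => x i + y i)) c =
  Defs.dist d (Tdelta d de y) (fun i => c i - Tdelta d de x i).
Proof.
  unfold Defs.dist. f_equal. apply vsum_ext. intros i _. rewrite Tdelta_add. ring.
Qed.

End Distortion.

Lemma finite_choice (n : nat) (P : nat -> nat -> Prop) :
  (forall j, (j < n)%nat -> exists i, P j i) ->
  exists f : nat -> nat, forall j, (j < n)%nat -> P j (f j).
Proof.
  induction n as [|n IH]; intros H.
  - exists (fun _ => 0%nat). intros; lia.
  - destruct IH as [f Hf]; [intros; apply H; lia|].
    destruct (H n ltac:(lia)) as [i Hi].
    exists (fun j => if (j =? n)%nat then i else f j). intros j Hj.
    destruct (Nat.eqb_spec j n) as [->|Hjn]; [exact Hi | apply Hf; lia].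
Qed.

Lemma freudenthal_chain_mono (d : nat) (p : nat -> nat -> Z) (k k' i : nat) :
  freudenthal_chain d p -> (k <= k' <= d)%nat -> (i < d)%nat -> (p k i <= p k' i)%Z.
Proof.
  intros [_ Hstep] Hk Hi.
  assert (H : forall m, (k + m <= d)%nat -> (p k i <= p (k + m)%nat i)%Z).
  { induction m as [|m IH]; intros Hm; [rewrite Nat.add_0_r; lia|].
    replace (k + S m)%nat with (S (k + m)) by lia.
    destruct (Hstep (k + m)%nat ltac:(lia)) as [Hle _].
    specialize (Hle i Hi). specialize (IH ltac:(lia)). lia. }
  replace k' with (k + (k' - k))%nat by lia. apply H. lia.
Qed.

Definition chain_perm (d : nat) (p : nat -> nat -> Z) (s : nat -> nat) : Prop :=
  bFun d s /\
  forall k j, (k <= d)%nat -> (j < d)%nat -> p k (s j) = (if (j <? k)%nat then 1 else 0)%Z.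

Lemma chain_perm_exists (d : nat) (p : nat -> nat -> Z) :
  freudenthal_chain d p -> exists s, chain_perm d p s.
Proof.
  intros Hch. pose proof Hch as [H01 Hstep].
  destruct (finite_choice d (fun j i => (i < d)%nat /\ p j i <> p (S j) i)) as [s Hs].
  { intros j Hj. apply (Hstep j Hj). }
  exists s. split; [intros j Hj; apply Hs, Hj|].
  intros k j Hk Hj. destruct (Hs j Hj) as [Hsj Hne].
  assert (Hjump : p j (s j) = 0%Z /\ p (S j) (s j) = 1%Z).
  { pose proof (freudenthal_chain_mono d p j (S j) (s j) Hch ltac:(lia) Hsj).
    destruct (H01 j (s j) ltac:(lia) Hsj), (H01 (S j) (s j) ltac:(lia) Hsj); lia. }
  destruct (H01 k (s j) Hk Hsj); destruct (Nat.ltb_spec j k).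
  - pose proof (freudenthal_chain_mono d p (S j) k (s j) Hch ltac:(lia) Hsj). lia.
  - assumption.
  - assumption.
  - pose proof (freudenthal_chain_mono d p k j (s j) Hch ltac:(lia) Hsj). lia.
Qed.

Section ChainPerm.

Variables (d : nat) (p : nat -> nat -> Z) (s : nat -> nat).
Hypothesis Hs : chain_perm d p s.

Lemma chain_perm_bInjective : bInjective d s.
Proof.
  destruct Hs as [_ Hp].
  assert (Hlt : forall i j, (i < j < d)%nat -> s i <> s j).
  { intros i j Hij Heq. pose proof (Hp j i ltac:(lia) ltac:(lia)) as E1.
    pose proof (Hp j j ltac:(lia) ltac:(lia)) as E2. rewrite Nat.ltb_irrefl in E2.
    destruct (Nat.ltb_spec i j); [|lia]. congruence. }
  intros i j Hi Hj Heq. destruct (Nat.lt_total i j) as [H|[H|H]]; [|exact H|];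
    exfalso; [apply (Hlt i j) | apply (Hlt j i)]; auto.
Qed.

Lemma chain_perm_inverse :
  exists g, bFun d g /\ forall i, (i < d)%nat -> g (s i) = i /\ s (g i) = i.
Proof.
  apply bSurjective_bBijective; [apply Hs|].
  apply bInjective_bSurjective; [apply Hs | apply chain_perm_bInjective].
Qed.

Lemma vsum_chain_vertex (k : nat) (f : nat -> R) : (k <= d)%nat ->
  vsum d (fun i => IZR (p k i) * f i) = vsum k (fun j => f (s j)).
Proof.
  intros Hk. destruct Hs as [Hb Hp].
  rewrite (vsum_perm d s _ Hb chain_perm_bInjective), <- (vsum_prefix d k) by exact Hk.
  apply vsum_ext. intros j Hj. rewrite Hp by assumption.
  destruct (j <? k)%nat; simpl; ring.
Qed.

End ChainPerm.

Definition std_chain (k i : nat) : Z := if (i <? k)%nat then 1%Z else 0%Z.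

Lemma chain_perm_std (d : nat) : chain_perm d std_chain (fun j => j).
Proof. split; [intros j Hj; exact Hj | reflexivity]. Qed.

Lemma freudenthal_chain_std (d : nat) : freudenthal_chain d std_chain.
Proof.
  unfold std_chain. split.
  - intros k i _ _. destruct (i <? k)%nat; auto.
  - intros k Hk. split.
    + intros i _. destruct (Nat.ltb_spec i k), (Nat.ltb_spec i (S k)); lia.
    + exists k. split; [exact Hk|]. rewrite Nat.ltb_irrefl.
      destruct (Nat.ltb_spec k (S k)); [discriminate | lia].
Qed.

Definition gap (n : nat) (a b : R) (v : nat -> R) : R :=
  a * vsum n (fun j => v j * (v j - 1)) +
  b * vsum n (fun j => vsum j (fun i => (v i - v j) * (v i - v j - 1))).

Lemma vsum_pairs (n : nat) (v : nat -> R) :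
  vsum n (fun j => vsum j (fun i => (v i - v j) * (v i - v j - 1))) =
  INR n * vsum n (fun j => v j ^ 2) - vsum n v ^ 2
  - vsum n (fun j => v j * (INR n - 1 - 2 * INR j)).
Proof.
  induction n as [|n IH]; [rewrite !vsum_0; ring|].
  rewrite !vsum_S, IH.
  rewrite (vsum_ext n (fun i => (v i - v n) * (v i - v n - 1))
             (fun i => (v i ^ 2 + (- (2 * v n + 1)) * v i) + (v n ^ 2 + v n))) by (intros; ring).
  rewrite (vsum_ext n (fun j => v j * (INR (S n) - 1 - 2 * INR j))
             (fun j => v j * (INR n - 1 - 2 * INR j) + v j)) by (intros; rewrite S_INR; ring).
  rewrite !vsum_add, !vsum_scal, !vsum_const, S_INR. ring.
Qed.

Lemma gap_eq (n : nat) (b : R) (v : nat -> R) :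
  vsum n (fun j => v j ^ 2) - b * vsum n v ^ 2
  - 2 * vsum n (fun j => v j * (1 / 2 - b * (INR j + 1 / 2))) =
  gap n (1 - b * INR n) b v.
Proof.
  unfold gap. rewrite vsum_pairs.
  rewrite (vsum_ext n (fun j => v j * (v j - 1)) (fun j => v j ^ 2 + (-1) * v j))
    by (intros; ring).
  rewrite (vsum_ext n (fun j => v j * (1 / 2 - b * (INR j + 1 / 2)))
             (fun j => (1 / 2 - b / 2) * v j + (- b) * (v j * INR j))) by (intros; field).
  rewrite (vsum_ext n (fun j => v j * (INR n - 1 - 2 * INR j))
             (fun j => (INR n - 1) * v j + (-2) * (v j * INR j))) by (intros; ring).
  rewrite !vsum_add, !vsum_scal. field.
Qed.

Definition unit_vec (k j : nat) : Z := if (j =? k)%nat then 1%Z else 0%Z.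

Lemma gap_neg_unit_last (n : nat) (a b : R) : (0 < n)%nat ->
  gap n a b (fun j => IZR (- unit_vec (n - 1) j)) = 2 * a.
Proof.
  intros Hn. unfold gap, unit_vec.
  rewrite (vsum_eq_single n (n - 1)); [| lia |].
  2:{ intros j _ Hj. destruct (Nat.eqb_spec j (n - 1)); [lia | simpl; ring]. }
  rewrite (vsum_eq_0 n).
  2:{ intros j Hj. apply vsum_eq_0. intros i Hi.
      destruct (Nat.eqb_spec i (n - 1)); [lia|].
      destruct (Nat.eqb_spec j (n - 1)); simpl; ring. }
  rewrite Nat.eqb_refl. simpl. ring.
Qed.

Lemma gap_unit_1 (n : nat) (a b : R) : (2 <= n)%nat ->
  gap n a b (fun j => IZR (unit_vec 1 j)) = 2 * b.
Proof.
  intros Hn. unfold gap, unit_vec.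
  rewrite (vsum_eq_0 n).
  2:{ intros j _. destruct (Nat.eqb_spec j 1); simpl; ring. }
  rewrite (vsum_eq_single n 1); [| lia |].
  2:{ intros j _ Hj. apply vsum_eq_0. intros i Hi.
      destruct (Nat.eqb_spec i 1), (Nat.eqb_spec j 1); try lia; simpl; ring. }
  rewrite vsum_S, vsum_0. simpl. ring.
Qed.

Lemma IZR_mul_pred_nonneg (n : Z) : 0 <= IZR n * (IZR n - 1).
Proof. rewrite <- minus_IZR, <- mult_IZR. apply IZR_le. nia. Qed.

Lemma IZR_mul_pred_lt_2 (n : Z) : IZR n * (IZR n - 1) < 2 -> n = 0%Z \/ n = 1%Z.
Proof. rewrite <- minus_IZR, <- mult_IZR. intros H. apply lt_IZR in H. nia. Qed.

Lemma staircase (n : nat) (V : nat -> Z) :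
  (forall j, (j < n)%nat -> V j = 0%Z \/ V j = 1%Z) ->
  (forall i j, (i < j < n)%nat -> (V j <= V i)%Z) ->
  exists k, (k <= n)%nat /\ forall j, (j < n)%nat -> V j = (if (j <? k)%nat then 1 else 0)%Z.
Proof.
  induction n as [|n IH]; intros H01 Hdec.
  - exists 0%nat. split; [lia | intros; lia].
  - destruct IH as [k [Hk Hv]]; [intros; apply H01; lia | intros; apply Hdec; lia|].
    destruct (H01 n ltac:(lia)) as [E|E].
    + exists k. split; [lia|]. intros j Hj. destruct (Nat.eq_dec j n) as [->|Hjn].
      * destruct (Nat.ltb_spec n k); [lia | exact E].
      * apply Hv. lia.
    + exists (S n). split; [lia|]. intros j Hj. destruct (Nat.ltb_spec j (S n)); [|lia].
      destruct (Nat.eq_dec j n) as [->|Hjn]; [exact E|].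
      pose proof (Hdec j n ltac:(lia)). destruct (H01 j ltac:(lia)); lia.
Qed.

Lemma gap_lt_min_staircase (n : nat) (a b : R) (V : nat -> Z) : 0 <= a -> 0 <= b ->
  gap n a b (fun j => IZR (V j)) < Rmin (2 * a) (2 * b) ->
  exists k, (k <= n)%nat /\ forall j, (j < n)%nat -> V j = (if (j <? k)%nat then 1 else 0)%Z.
Proof.
  intros Ha Hb Hgap. unfold gap in Hgap.
  set (A := vsum n _) in Hgap. set (B := vsum n _) in Hgap.
  set (pair_term := fun i j => (IZR (V i) - IZR (V j)) * (IZR (V i) - IZR (V j) - 1)).
  assert (Hpair0 : forall i j, 0 <= pair_term i j)
    by (intros; unfold pair_term; rewrite <- minus_IZR; apply IZR_mul_pred_nonneg).
  assert (Hpair : forall i j, (i < j < n)%nat -> pair_term i j <= B).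
  { intros i j Hij. apply (Rle_trans _ (vsum j (fun i => pair_term i j))).
    - apply (vsum_term_le j (fun i => pair_term i j) i); [intros; apply Hpair0 | lia].
    - apply (vsum_term_le n (fun j => vsum j (fun i => pair_term i j)) j); [|lia].
      intros; apply vsum_nonneg; intros; apply Hpair0. }
  assert (HA : 0 <= A) by (apply vsum_nonneg; intros; apply IZR_mul_pred_nonneg).
  assert (HB : 0 <= B) by (apply vsum_nonneg; intros; apply vsum_nonneg; intros; apply Hpair0).
  pose proof (Rmin_l (2 * a) (2 * b)). pose proof (Rmin_r (2 * a) (2 * b)).
  assert (0 <= a * A) by (apply Rmult_le_pos; assumption).
  assert (0 <= b * B) by (apply Rmult_le_pos; assumption).
  assert (Ha' : 0 < a) by lra. assert (Hb' : 0 < b) by lra.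
  apply staircase.
  - intros j Hj. apply IZR_mul_pred_lt_2.
    assert (IZR (V j) * (IZR (V j) - 1) <= A)
      by (apply (vsum_term_le n (fun j => IZR (V j) * (IZR (V j) - 1)) j);
          [intros; apply IZR_mul_pred_nonneg | exact Hj]).
    nra.
  - intros i j Hij. pose proof (Hpair i j Hij) as Hp. unfold pair_term in Hp.
    rewrite <- minus_IZR in Hp.
    assert (Hlt : IZR (V i - V j) * (IZR (V i - V j) - 1) < 2) by nra.
    apply IZR_mul_pred_lt_2 in Hlt. lia.
Qed.

Definition tau (d : nat) (de : R) (j : nat) : R := 1 / 2 - beta d de * (INR j + 1 / 2).

Definition radius_sq (d : nat) (de : R) : R := Ndelta d de / (12 * INR d).

Definition rel_center (d : nat) (de : R) (z : nat -> Z) (c : nat -> R) (i : nat) : R :=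
  c i - Tdelta d de (zvec z) i.

Section Circumsphere.

Variables (d : nat) (de : R).
Hypotheses (HD : INR d <> 0) (Hde : de <> 0).

Lemma vsum_tau (n : nat) : vsum n (tau d de) = INR n / 2 - beta d de * INR n ^ 2 / 2.
Proof.
  unfold tau.
  rewrite (vsum_ext n _ (fun j => (- beta d de) * INR j + (1 / 2 - beta d de / 2)))
    by (intros; field).
  rewrite vsum_add, vsum_scal, vsum_const, vsum_INR. field.
Qed.

Lemma radius_sq_tau :
  vsum d (fun j => tau d de j ^ 2) + beta d de / de ^ 2 * vsum d (tau d de) ^ 2 =
  radius_sq d de.
Proof.
  set (b := beta d de).
  rewrite (vsum_ext d _ (fun j => (b ^ 2 * INR j ^ 2 + (- (2 * (1 / 2 - b / 2) * b)) * INR j)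
                                   + (1 / 2 - b / 2) ^ 2)) by (intros; unfold tau; fold b; field).
  rewrite !vsum_add, !vsum_scal, vsum_const, vsum_INR, vsum_INR_sq, vsum_tau. fold b.
  unfold b, beta, radius_sq, Ndelta. field. split; assumption.
Qed.

Lemma sq_norm_of_Tdelta_tau (s : nat -> nat) (c : nat -> R) :
  bFun d s -> bInjective d s ->
  (forall j, (j < d)%nat -> Tdelta d de c (s j) = tau d de j) ->
  vsum d (fun i => c i ^ 2) = radius_sq d de.
Proof.
  intros Hb Hi Hc. rewrite <- radius_sq_tau.
  assert (Hsq : vsum d (fun j => tau d de j ^ 2) = vsum d (fun i => Tdelta d de c i ^ 2)).
  { rewrite (vsum_perm d s (fun i => Tdelta d de c i ^ 2) Hb Hi).
    apply vsum_ext. intros j Hj. cbv beta. rewrite Hc by exact Hj. reflexivity. }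
  assert (Hsum : vsum d (tau d de) = de * vsum d c).
  { rewrite <- vsum_Tdelta by exact HD. rewrite (vsum_perm d s (Tdelta d de c) Hb Hi).
    apply vsum_ext. intros j Hj. rewrite Hc by exact Hj. reflexivity. }
  rewrite Hsq, Hsum, vsum_Tdelta_sq by exact HD. field. exact Hde.
Qed.

Lemma dist_dvertex (z : nat -> Z) (p : nat -> nat -> Z) (k : nat) (c : nat -> R) :
  Defs.dist d (dvertex d de z p k) c =
  sqrt (vsum d (fun i => (Tdelta d de (fun i => IZR (p k i)) i - rel_center d de z c i) ^ 2)).
Proof.
  unfold dvertex.
  replace (fun i => IZR (z i + p k i)) with (fun i => zvec z i + IZR (p k i))
    by (apply functional_extensionality; intros i; symmetry; apply plus_IZR).
  rewrite dist_Tdelta_translate. reflexivity.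
Qed.

Section Chain.

Variables (z : nat -> Z) (p : nat -> nat -> Z) (s : nat -> nat).
Hypothesis Hs : chain_perm d p s.

Lemma sq_dist_vertex (c : nat -> R) (k : nat) : (k <= d)%nat ->
  vsum d (fun i => (Tdelta d de (fun i => IZR (p k i)) i - c i) ^ 2) =
  INR k - beta d de * INR k ^ 2 - 2 * vsum k (fun j => Tdelta d de c (s j))
  + vsum d (fun i => c i ^ 2).
Proof.
  intros Hk. rewrite sq_dist_Tdelta by exact HD.
  assert (Hones : vsum k (fun j => IZR (p k (s j))) = INR k).
  { rewrite <- (Rmult_1_r (INR k)), <- vsum_const. apply vsum_ext. intros j Hj.
    destruct Hs as [_ Hp]. rewrite Hp by lia. destruct (Nat.ltb_spec j k); [reflexivity | lia]. }
  rewrite (vsum_ext d (fun i => IZR (p k i) ^ 2) (fun i => IZR (p k i) * IZR (p k i)))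
    by (intros; ring).
  rewrite (vsum_ext d (fun i => IZR (p k i)) (fun i => IZR (p k i) * 1)) by (intros; ring).
  rewrite !(vsum_chain_vertex d p s Hs) by exact Hk.
  rewrite Hones, vsum_const. ring.
Qed.

Lemma circumsphere_center (c : nat -> R) (r : R) : circumsphere d de z p c r ->
  (forall j, (j < d)%nat -> Tdelta d de (rel_center d de z c) (s j) = tau d de j) /\
  r = sqrt (radius_sq d de).
Proof.
  intros Hc. set (c' := rel_center d de z c).
  assert (HV : forall k, (k <= d)%nat -> r ^ 2 =
    INR k - beta d de * INR k ^ 2 - 2 * vsum k (fun j => Tdelta d de c' (s j))
    + vsum d (fun i => c' i ^ 2)).
  { intros k Hk. rewrite <- sq_dist_vertex by exact Hk.
    rewrite <- (Hc k Hk), dist_dvertex. apply pow2_sqrt.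
    apply vsum_nonneg. intros. apply pow2_ge_0. }
  assert (Htau : forall j, (j < d)%nat -> Tdelta d de c' (s j) = tau d de j).
  { intros j Hj. pose proof (HV j ltac:(lia)) as Ej. pose proof (HV (S j) ltac:(lia)) as ESj.
    rewrite vsum_S, S_INR in ESj. unfold tau. lra. }
  split; [exact Htau|].
  assert (Hr : 0 <= r) by (rewrite <- (Hc 0%nat ltac:(lia)); apply sqrt_pos).
  pose proof (HV 0%nat ltac:(lia)) as E0. rewrite vsum_0 in E0. simpl INR in E0.
  rewrite <- (sq_norm_of_Tdelta_tau s c' (proj1 Hs) (chain_perm_bInjective d p s Hs) Htau).
  rewrite <- (sqrt_pow2 r Hr). f_equal. lra.
Qed.

Lemma circumsphere_exists : exists c, circumsphere d de z p c (sqrt (radius_sq d de)).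
Proof.
  destruct (chain_perm_inverse d p s Hs) as [g [Hg Hgs]].
  set (y := fun i => tau d de (g i)).
  set (c' := fun i => y i + (1 - de) / (de * INR d) * vsum d y).
  assert (Htau : forall j, (j < d)%nat -> Tdelta d de c' (s j) = tau d de j).
  { intros j Hj. unfold c'. rewrite Tdelta_inv by assumption. unfold y.
    rewrite (proj1 (Hgs j Hj)). reflexivity. }
  exists (fun i => c' i + Tdelta d de (zvec z) i). intros k Hk.
  rewrite dist_dvertex.
  rewrite (vsum_ext d _ (fun i => (Tdelta d de (fun i => IZR (p k i)) i - c' i) ^ 2))
    by (intros; unfold rel_center; f_equal; ring).
  rewrite sq_dist_vertex by exact Hk.
  rewrite (sq_norm_of_Tdelta_tau s c' (proj1 Hs) (chain_perm_bInjective d p s Hs) Htau).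
  rewrite (vsum_ext k _ (tau d de)) by (intros; apply Htau; lia).
  rewrite vsum_tau. f_equal. field.
Qed.

Lemma sq_dist_lattice_point (c : nat -> R) (r : R) (w : nat -> Z) :
  circumsphere d de z p c r ->
  Defs.dist d (Tdelta d de (zvec w)) c =
  sqrt (radius_sq d de + gap d (de ^ 2) (beta d de) (fun j => IZR (w (s j) - z (s j)))).
Proof.
  intros Hc. destruct (circumsphere_center c r Hc) as [Htau _].
  destruct Hs as [Hb _]. pose proof (chain_perm_bInjective d p s Hs) as Hi.
  set (u := fun i => IZR (w i - z i)).
  replace (zvec w) with (fun i => zvec z i + u i)
    by (apply functional_extensionality; intros i; unfold zvec, u;
        rewrite minus_IZR; ring).
  rewrite dist_Tdelta_translate.
  change (fun i => c i - Tdelta d de (zvec z) i) with (rel_center d de z c).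
  unfold Defs.dist. f_equal. rewrite sq_dist_Tdelta by exact HD.
  rewrite (sq_norm_of_Tdelta_tau s (rel_center d de z c) Hb Hi Htau).
  rewrite (vsum_perm d s (fun i => u i ^ 2) Hb Hi), (vsum_perm d s u Hb Hi),
          (vsum_perm d s (fun i => u i * Tdelta d de (rel_center d de z c) i) Hb Hi).
  rewrite (vsum_ext d (fun j => u (s j) * Tdelta d de (rel_center d de z c) (s j))
             (fun j => u (s j) * (1 / 2 - beta d de * (INR j + 1 / 2))))
    by (intros j Hj; rewrite Htau by exact Hj; reflexivity).
  rewrite gap_eq. replace (1 - beta d de * INR d) with (de ^ 2) by (unfold beta; field; exact HD).
  unfold u. ring.
Qed.

Lemma protection_lower_bound (c : nat -> R) (r : R) (w : nat -> Z) :
  0 <= beta d de -> circumsphere d de z p c r ->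
  ~ (exists k, (k <= d)%nat /\ veq d (Tdelta d de (zvec w)) (dvertex d de z p k)) ->
  sqrt (radius_sq d de + Rmin (2 * de ^ 2) (2 * beta d de)) <=
  Defs.dist d (Tdelta d de (zvec w)) c.
Proof.
  intros Hb Hc Hnv. rewrite (sq_dist_lattice_point c r w Hc).
  apply sqrt_le_1_alt, Rplus_le_compat_l.
  destruct (Rle_lt_dec (Rmin (2 * de ^ 2) (2 * beta d de))
              (gap d (de ^ 2) (beta d de) (fun j => IZR (w (s j) - z (s j)))))
    as [Hle|Hlt]; [exact Hle | exfalso].
  destruct (gap_lt_min_staircase d (de ^ 2) (beta d de) (fun j => (w (s j) - z (s j))%Z))
    as [k [Hk Hv]]; [apply pow2_ge_0 | exact Hb | exact Hlt |].
  apply Hnv. exists k. split; [exact Hk|]. apply Tdelta_ext. intros i Hi.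
  destruct (chain_perm_inverse d p s Hs) as [g [Hg Hgs]].
  destruct (Hgs i Hi) as [_ Hsg].
  assert (Hpk : p k i = (if (g i <? k)%nat then 1 else 0)%Z).
  { transitivity (p k (s (g i))); [now rewrite Hsg | apply Hs; [exact Hk | apply Hg, Hi]]. }
  specialize (Hv (g i) (Hg i Hi)). cbv beta in Hv. rewrite Hsg in Hv.
  unfold zvec. f_equal. lia.
Qed.

End Chain.

Lemma protection_value_std (w : nat -> Z) :
  ~ (exists k, (k <= d)%nat /\ forall i, (i < d)%nat -> w i = std_chain k i) ->
  protection_values d de
    (sqrt (radius_sq d de + gap d (de ^ 2) (beta d de) (fun j => IZR (w j)))
     - sqrt (radius_sq d de)).
Proof.
  intros Hnv. set (z0 := fun _ : nat => 0%Z).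
  destruct (circumsphere_exists z0 std_chain (fun j => j) (chain_perm_std d)) as [c Hc].
  exists z0, std_chain, c, (sqrt (radius_sq d de)), w.
  split; [apply freudenthal_chain_std|]. split; [exact Hc|]. split.
  - intros [k [Hk Hv]]. apply Hnv. exists k. split; [exact Hk|]. intros i Hi.
    apply eq_IZR. exact (Tdelta_inj d de HD _ _ Hde Hv i Hi).
  - assert (Hv : (fun j => IZR (w j - z0 j)) = (fun j => IZR (w j))).
    { apply functional_extensionality. intros j. unfold z0. f_equal. ring. }
    rewrite (sq_dist_lattice_point z0 std_chain (fun j => j) (chain_perm_std d) c _ w Hc), Hv.
    reflexivity.
Qed.

End Circumsphere.

Definition protection (d : nat) (de : R) : R :=
  sqrt (radius_sq d de + Rmin (2 * de ^ 2) (2 * beta d de)) - sqrt (radius_sq d de).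

Lemma beta_nonneg (d : nat) (de : R) : (0 < d)%nat -> 0 <= de <= 1 -> 0 <= beta d de.
Proof.
  intros Hd Hde. unfold beta. apply Rmult_le_pos; [nra|].
  left. apply Rinv_0_lt_compat, lt_0_INR, Hd.
Qed.

Lemma protection_glb (d : nat) (de : R) : (2 <= d)%nat -> 0 < de <= 1 ->
  is_glb (protection_values d de) (protection d de).
Proof.
  intros Hd Hde.
  assert (HD : INR d <> 0) by (apply not_0_INR; lia).
  assert (Hde0 : de <> 0) by lra.
  split.
  - intros x (z & p & c & r & w & Hch & Hc & Hnv & ->).
    destruct (chain_perm_exists d p Hch) as [s Hs].
    pose proof (protection_lower_bound d de HD Hde0 z p s Hs c r w
                  (beta_nonneg d de ltac:(lia) ltac:(lra)) Hc Hnv).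
    destruct (circumsphere_center d de HD Hde0 z p s Hs c r Hc) as [_ ->].
    unfold protection. lra.
  - intros b Hb. apply Hb. unfold protection, Rmin.
    destruct (Rle_dec (2 * de ^ 2) (2 * beta d de)).
    + rewrite <- (gap_neg_unit_last d (de ^ 2) (beta d de)) by lia.
      apply (protection_value_std d de HD Hde0 (fun j => (- unit_vec (d - 1) j)%Z)).
      intros [k [Hk Hv]]. specialize (Hv (d - 1)%nat ltac:(lia)).
      unfold unit_vec, std_chain in Hv. rewrite Nat.eqb_refl in Hv.
      destruct (d - 1 <? k)%nat; lia.
    + rewrite <- (gap_unit_1 d (de ^ 2) (beta d de)) by lia.
      apply (protection_value_std d de HD Hde0 (unit_vec 1)).
      intros [k [Hk Hv]].
      pose proof (Hv 0%nat ltac:(lia)) as H0. pose proof (Hv 1%nat ltac:(lia)) as H1.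
      unfold unit_vec, std_chain in H0, H1; simpl in H0, H1.
      destruct (Nat.ltb_spec 0 k), (Nat.ltb_spec 1 k); lia.
Qed.

Lemma Ndelta_pos (d : nat) (de : R) : (2 <= d)%nat -> 0 < Ndelta d de.
Proof.
  intros Hd. assert (HD : 2 <= INR d) by (pose proof (le_INR 2 d Hd); simpl in *; lra).
  assert (0 <= de ^ 4 * (INR d ^ 2 - 1))
    by (apply Rmult_le_pos; [replace (de ^ 4) with ((de ^ 2) ^ 2) by ring; apply pow2_ge_0 | nra]).
  assert (0 <= de ^ 2 * (INR d ^ 2 + 2)) by (apply Rmult_le_pos; [apply pow2_ge_0 | nra]).
  unfold Ndelta. nra.
Qed.

Lemma sqrt_ratio (a b : R) : 0 < b -> 0 <= a -> (sqrt a - sqrt b) / sqrt b = sqrt (a / b) - 1.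
Proof.
  intros Hb Ha. rewrite sqrt_div_alt by exact Hb. field.
  apply Rgt_not_eq, sqrt_lt_R0, Hb.
Qed.

Lemma sq_mul_gt_of_inv_sqrt_lt (x y : R) : 0 < x -> 1 / sqrt x < y -> 1 < y ^ 2 * x.
Proof.
  intros Hx Hy.
  pose proof (sqrt_lt_R0 x Hx) as Hs. pose proof (sqrt_sqrt x (Rlt_le _ _ Hx)) as Hss.
  assert (1 < y * sqrt x).
  { apply (Rmult_lt_compat_r (sqrt x)) in Hy; [|exact Hs].
    unfold Rdiv in Hy. rewrite Rmult_1_l, Rinv_l in Hy by lra. exact Hy. }
  replace (y ^ 2 * x) with ((y * sqrt x) ^ 2) by (rewrite <- Hss at 2; ring). nra.
Qed.

Lemma sq_mul_lt_of_lt_inv_sqrt (x y : R) : 0 < x -> 0 < y -> y < 1 / sqrt x -> y ^ 2 * x < 1.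
Proof.
  intros Hx Hy0 Hy.
  pose proof (sqrt_lt_R0 x Hx) as Hs. pose proof (sqrt_sqrt x (Rlt_le _ _ Hx)) as Hss.
  assert (y * sqrt x < 1).
  { apply (Rmult_lt_compat_r (sqrt x)) in Hy; [|exact Hs].
    unfold Rdiv in Hy. rewrite Rmult_1_l, Rinv_l in Hy by lra. exact Hy. }
  assert (0 < y * sqrt x) by (apply Rmult_lt_0_compat; assumption).
  replace (y ^ 2 * x) with ((y * sqrt x) ^ 2) by (rewrite <- Hss at 2; ring). nra.
Qed.

Lemma sq_mul_inv_sqrt (x : R) : 0 < x -> (1 / sqrt x) ^ 2 * x = 1.
Proof.
  intros Hx. pose proof (sqrt_lt_R0 x Hx). pose proof (sqrt_sqrt x (Rlt_le _ _ Hx)) as Hss.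
  rewrite <- Hss at 2. field. lra.
Qed.

Section Ratio.

Variables (d : nat) (de : R).
Hypotheses (Hd : (2 <= d)%nat) (Hde : 0 < de <= 1).

Let HD : 0 < INR d.
Proof. apply lt_0_INR. lia. Qed.

Let Hbeta : beta d de * INR d = 1 - de ^ 2.
Proof. unfold beta. field. pose proof HD. lra. Qed.

Lemma protection_div_radius :
  protection d de / sqrt (radius_sq d de) =
  sqrt ((Ndelta d de + 12 * INR d * Rmin (2 * de ^ 2) (2 * beta d de)) / Ndelta d de) - 1.
Proof.
  pose proof HD. pose proof (Ndelta_pos d de Hd).
  assert (0 < radius_sq d de) by (unfold radius_sq; apply Rdiv_lt_0_compat; lra).
  assert (0 <= Rmin (2 * de ^ 2) (2 * beta d de)).
  { pose proof (pow2_ge_0 de). pose proof (beta_nonneg d de ltac:(lia) ltac:(lra)).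
    apply Rmin_glb; lra. }
  unfold protection. rewrite sqrt_ratio by lra.
  do 2 f_equal. unfold radius_sq. field. lra.
Qed.

Lemma protection_ratio_above : 1 / sqrt (INR d + 1) < de ->
  protection d de / sqrt (radius_sq d de) =
  sqrt ((de ^ 4 * (INR d ^ 2 - 1) + de ^ 2 * (INR d ^ 2 - 22) + INR d ^ 2 + 23) / Ndelta d de) - 1.
Proof.
  intros Hcase. apply sq_mul_gt_of_inv_sqrt_lt in Hcase; [|pose proof HD; lra].
  rewrite protection_div_radius, Rmin_right by (pose proof HD; nra).
  replace (12 * INR d * (2 * beta d de)) with (24 * (1 - de ^ 2)) by (rewrite <- Hbeta; ring).
  unfold Ndelta. do 3 f_equal. ring.
Qed.

Lemma protection_ratio_at : de = 1 / sqrt (INR d + 1) ->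
  protection d de / sqrt (radius_sq d de) =
  sqrt ((INR d ^ 2 + 2 * INR d + 24) / (INR d ^ 2 + 2 * INR d)) - 1.
Proof.
  intros Hcase. pose proof HD.
  apply (f_equal (fun y => y ^ 2 * (INR d + 1))) in Hcase.
  rewrite sq_mul_inv_sqrt in Hcase by lra.
  rewrite protection_div_radius, Rmin_left by nra.
  do 2 f_equal. unfold Ndelta. replace (de ^ 4) with ((de ^ 2) ^ 2) by ring.
  replace (de ^ 2) with (1 / (INR d + 1)) by (rewrite <- Hcase at 1; field; lra).
  field. nra.
Qed.

Lemma protection_ratio_below : de < 1 / sqrt (INR d + 1) ->
  protection d de / sqrt (radius_sq d de) =
  sqrt ((de ^ 4 * (INR d ^ 2 - 1) + de ^ 2 * (INR d ^ 2 + 24 * INR d + 2) + INR d ^ 2 - 1)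
        / Ndelta d de) - 1.
Proof.
  intros Hcase. pose proof HD.
  apply sq_mul_lt_of_lt_inv_sqrt in Hcase; [|lra | lra].
  rewrite protection_div_radius, Rmin_left by nra.
  unfold Ndelta. do 3 f_equal. ring.
Qed.

End Ratio.

Theorem theorem4 (d : nat) (delta : R) :
  (2 <= d)%nat -> 0 < delta <= 1 ->
  let D := INR d in
  let N := Ndelta d delta in
  let R := sqrt (N / (12 * D)) in
  (forall z p, freudenthal_chain d p -> exists c, circumsphere d delta z p c R) /\
  (forall z p c r, freudenthal_chain d p -> circumsphere d delta z p c r -> r = R) /\
  (exists P, is_glb (protection_values d delta) P /\
     (1 / sqrt (D + 1) < delta ->
        P / R = sqrt ((delta ^ 4 * (D ^ 2 - 1) + delta ^ 2 * (D ^ 2 - 22) + D ^ 2 + 23) / N) - 1) /\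
     (delta = 1 / sqrt (D + 1) ->
        P / R = sqrt ((D ^ 2 + 2 * D + 24) / (D ^ 2 + 2 * D)) - 1) /\
     (delta < 1 / sqrt (D + 1) ->
        P / R = sqrt ((delta ^ 4 * (D ^ 2 - 1) + delta ^ 2 * (D ^ 2 + 24 * D + 2) + D ^ 2 - 1) / N) - 1)).
Proof.
  intros Hd Hde. cbv zeta.
  change (sqrt (Ndelta d delta / (12 * INR d))) with (sqrt (radius_sq d delta)).
  assert (HD : INR d <> 0) by (apply not_0_INR; lia).
  assert (Hde0 : delta <> 0) by lra.
  split; [|split].
  - intros z p Hch. destruct (chain_perm_exists d p Hch) as [s Hs].
    exact (circumsphere_exists d delta HD Hde0 z p s Hs).
  - intros z p c r Hch Hc. destruct (chain_perm_exists d p Hch) as [s Hs].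
    exact (proj2 (circumsphere_center d delta HD Hde0 z p s Hs c r Hc)).
  - exists (protection d delta). split; [apply protection_glb; assumption|].
    split; [|split];
      [apply protection_ratio_above | apply protection_ratio_at | apply protection_ratio_below];
      assumption.
Qed.
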